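(* For each positive integer $n$, let $A_n=\{a_{0n},\dots,a_{nn}\}$ with $(a_{0n},\dots,a_{nn})\in[0,1]^{n+1}$ a minimizer of $$(x_0,\dots,x_n)\mapsto \max_{p\in[0,1]}\sum_{k=0}^n\binom{n}{k}p^k(1-p)^{n-k}|p-x_k|$$ over $[0,1]^{n+1}$. Then the normalized counting measures $\frac{1}{n+1}\sum_{j=0}^n\delta_{a_{jn}}$ converge weak$^*$ to Lebesgue measure $dx$ on $[0,1]$ as $n\to\infty$.
   Context: $\delta_x$ denotes the unit point mass at $x$. Weak$^*$ convergence of measures $\mu_n\to\mu$ on $[0,1]$ means $\int g\,d\mu_n\to\int g\,d\mu$ for all $g\in C[0,1]$. *)

From HB Require Import structures.
From mathcomp Require Import all_boot all_order all_algebra.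
From mathcomp Require Import all_classical all_reals all_analysis.
Set Implicit Arguments. Unset Strict Implicit. Unset Printing Implicit Defensive.
Import Order.TTheory GRing.Theory Num.Theory.
Import numFieldNormedType.Exports.
Local Open Scope classical_set_scope.
Local Open Scope ring_scope.

Definition bern_dev {R : realType} (n : nat) (x : 'I_n.+1 -> R) (p : R) : R :=
  \sum_(k < n.+1) ('C(n, k))%:R * p ^+ k * (1 - p) ^+ (n - k) * `|p - x k|.

(* max_{p in [0,1]} of the above (the sup is attained by continuity) *)
Definition max_dev {R : realType} (n : nat) (x : 'I_n.+1 -> R) : R :=
  sup [set bern_dev x p | p in `[0, 1]%classic].

Definition in_cube {R : realType} (n : nat) (x : 'I_n.+1 -> R) : Prop :=
  forall k, x k \in `[0, 1]%R.

Definition is_minimizer {R : realType} (n : nat) (x : 'I_n.+1 -> R) : Prop :=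
  in_cube x /\ forall y : 'I_n.+1 -> R, in_cube y -> max_dev x <= max_dev y.

From HB Require Import structures.
From mathcomp Require Import all_boot all_order all_algebra.
From mathcomp Require Import all_classical all_reals all_analysis.
From mathcomp Require Import ring lra.
Set Implicit Arguments.
Unset Strict Implicit.
Unset Printing Implicit Defensive.
Import Order.TTheory GRing.Theory Num.Theory.
Import numFieldNormedType.Exports.
Local Open Scope classical_set_scope.
Local Open Scope ring_scope.

(* For the uniform grid x_k = k/n, the inequality |t| <= eta + t^2/eta and
   the variance p(1-p)/n of the Bernstein weights b_{n,k}(p) give
   max_dev <= eta + 1/(eta n); a minimizer does at least as well, so
   max_dev (a n) -> 0.  Since every b_{n,k} has integral 1/(n+1) on [0,1],
   the empirical mean of g over a n is the integral of
   sum_k g (a n k) b_{n,k}, and uniform continuity of g bounds the distance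
   of this polynomial to g by eps + (2 sup|g| / delta) max_dev (a n). *)

Lemma Rintegral_sum d (T : measurableType d) (R : realType)
    (mu : {measure set T -> \bar R}) (D : set T) (I : Type) (s : seq I)
    (F : I -> T -> R) :
  measurable D -> (forall i, mu.-integrable D (EFin \o F i)) ->
  \int[mu]_(x in D) (\sum_(i <- s) F i x) = \sum_(i <- s) \int[mu]_(x in D) F i x.
Proof.
move=> mD Fint; elim: s => [|i s IHs].
  under eq_Rintegral do rewrite big_nil.
  by rewrite big_nil Rintegral_cst // mul0r.
have sum_int : mu.-integrable D (EFin \o fun x => \sum_(j <- s) F j x).
  apply: eq_integrable mD _ _ _ (integrable_sum mD s (fun j _ => Fint j)) => x _.
  by rewrite /= sumEFin.
rewrite big_cons -IHs -RintegralD //.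
by apply: eq_Rintegral => x _; rewrite big_cons.
Qed.

Section real_functions.
Context {R : realType}.
Local Notation mu := (@lebesgue_measure R).

Lemma ler_norm_add_sqr_div (t eta : R) : 0 < eta -> `|t| <= eta + t ^+ 2 / eta.
Proof.
move=> eta_gt0; rewrite -real_normK ?num_real //.
have [t_le | eta_lt] := lerP `|t| eta.
  by rewrite (le_trans t_le) // lerDl divr_ge0 ?sqr_ge0 ?ltW.
apply: ler_wpDl; first exact: ltW.
by rewrite ler_pdivlMr // expr2 ler_wpM2l // ltW.
Qed.

Lemma compact_unif_continuous (A : set R) (g : R -> R) :
  compact A -> {within A, continuous g} ->
  forall e, 0 < e -> exists2 d, 0 < d &
    forall u v, A u -> A v -> `|u - v| < d -> `|g u - g v| < e.
Proof.
move=> /compact_near_coveringP/near_covering_withinP A_cover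
  /subspace_continuousP gc e e_gt0.
pose close d u := forall v, A v -> `|u - v| < d -> `|g u - g v| < e.
suff A_close : \forall d \near (0 : R)^'+, A `<=` close d.
  near (0 : R)^'+ => d; exists d; first by near: d; exact: nbhs_right_gt.
  by move=> u v Au; apply: (near A_close d).
apply: A_cover => u Au.
have /cvgrPdist_lt/(_ (e / 2))/(_ _)/nbhs_ballP[|r /= r_gt0 ur] := gc u Au.
  by rewrite divr_gt0.
near=> w d => /= Aw v Av wv.
have uw : `|u - w| < r / 2.
  by near: w; apply: (@near_ball _ _ u (r / 2)); rewrite divr_gt0.
have d_lt : d < r / 2 by near: d; apply: nbhs_right_lt; rewrite divr_gt0.
have uv : `|u - v| < r.
  by rewrite (splitr r) (le_lt_trans (ler_distD w _ _)) // ltrD // (lt_trans wv).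
rewrite (le_lt_trans (ler_distD (g u) _ _)) // [e in _ < e](splitr e) distrC.
by rewrite ltrD // ur //= /ball /= (lt_trans uw) // ltr_pdivrMr // ltr_pMr // ltr1n.
Unshelve. all: end_near.
Qed.

Lemma dist_le_unif_modulus (A : set R) (g : R -> R) M d e u v : 0 < d ->
  (forall y, A y -> `|g y| <= M) ->
  (forall u v, A u -> A v -> `|u - v| < d -> `|g u - g v| < e) ->
  A u -> A v -> `|g u - g v| <= e + 2 * M / d * `|u - v|.
Proof.
move=> d_gt0 gM g_unif Au Av.
have e_ge0 : 0 <= e.
  by apply/ltW/(le_lt_trans _ (g_unif u u Au Au _)); rewrite subrr normr0.
have M_ge0 : 0 <= M := le_trans (normr_ge0 _) (gM u Au).
have [uv_lt | uv_ge] := ltrP `|u - v| d.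
  apply: ler_wpDr (ltW (g_unif u v Au Av uv_lt)).
  by rewrite mulr_ge0 // divr_ge0 ?mulr_ge0 // ltW.
apply: ler_wpDl e_ge0 _; apply: (@le_trans _ _ (2 * M)).
  by have := gM u Au; have := gM v Av; have := ler_normB (g u) (g v); lra.
by rewrite -mulrA ler_peMr ?mulr_ge0 // ler_pdivlMl // mulr1.
Qed.

Lemma normr_Rintegral01_le (h : R -> R) B :
  mu.-integrable `[0, 1] (EFin \o h) -> (forall p, p \in `[0, 1] -> `|h p| <= B) ->
  `|\int[mu]_(x in `[0, 1]) h x| <= B.
Proof.
move=> h_int hB; apply: le_trans (le_normr_Rintegral _ h_int) _ => //.
have cst_int : mu.-integrable `[0, 1] (EFin \o fun=> B).
  apply: continuous_compact_integrable; first exact: segment_compact.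
  by apply: continuous_in_subspaceT => x _; exact: cvg_cst.
apply: le_trans (le_Rintegral _ (integrable_norm h_int) cst_int _) _ => //.
by rewrite Rintegral_cst //= lebesgue_measure_itv /= lte01 EFinN sube0 /= mulr1.
Qed.

End real_functions.

Section bernstein_basis.
Context {R : realType}.
Implicit Types (n k : nat) (p : R).

Definition bernstein n k p : R := 'C(n, k)%:R * (p ^+ k * (1 - p) ^+ (n - k)).

Lemma bernstein_ge0 n k p : p \in `[0, 1] -> 0 <= bernstein n k p.
Proof.
rewrite in_itv /= => /andP[p0 p1].
by rewrite mulr_ge0 ?ler0n // mulr_ge0 // exprn_ge0 // subr_ge0.
Qed.

Lemma bernstein_small n k p : (n < k)%N -> bernstein n k p = 0.
Proof. by move=> nk; rewrite /bernstein bin_small // mul0r. Qed.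

Lemma bernsteinS0 n p : bernstein n.+1 0 p = (1 - p) * bernstein n 0 p.
Proof. by rewrite /bernstein !bin0 !subn0 exprS; ring. Qed.

Lemma bernsteinSS n k p :
  bernstein n.+1 k.+1 p = p * bernstein n k p + (1 - p) * bernstein n k.+1 p.
Proof.
have [lt_kn | le_nk] := ltnP k n.
  by rewrite /bernstein binS natrD subSS -(subnSK lt_kn) !exprS; ring.
rewrite (@bernstein_small n k.+1) ?ltnS // mulr0 addr0.
have [-> | neq_kn] := eqVneq k n; last first.
  have lt_nk : (n < k)%N by rewrite ltn_neqAle eq_sym neq_kn.
  by rewrite !bernstein_small ?mulr0.
by rewrite /bernstein !binn !subnn exprS; ring.
Qed.

Lemma sum_bernsteinS n (f : nat -> R) p :
  \sum_(k < n.+2) bernstein n.+1 k p * f k =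
  p * \sum_(k < n.+1) bernstein n k p * f k.+1 +
  (1 - p) * \sum_(k < n.+1) bernstein n k p * f k.
Proof.
have drop_last : \sum_(k < n.+2) bernstein n k p * f k =
    \sum_(k < n.+1) bernstein n k p * f k.
  by rewrite big_ord_recr /= bernstein_small // mul0r addr0.
rewrite -drop_last !(big_ord_recl n.+1) bernsteinS0 mulrDr.
under eq_bigr do
  rewrite lift0 bernsteinSS mulrDl -[p * _ * _]mulrA -[(1 - p) * _ * _]mulrA.
rewrite big_split /= -!mulr_sumr -[(1 - p) * bernstein n 0 p * _]mulrA addrCA.
by under [in RHS]eq_bigr do rewrite /bump /=.
Qed.

Lemma sum_bernstein n p : \sum_(k < n.+1) bernstein n k p = 1.
Proof.
rewrite -[RHS](expr1n _ n) -[X in X ^+ n](subrK p) exprDn.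
by apply: eq_bigr => k _; rewrite /bernstein mulr_natl mulrC.
Qed.

Lemma sum_bernstein_nat n p : \sum_(k < n.+1) bernstein n k p * k%:R = n%:R * p.
Proof.
elim: n => [|n IHn]; first by rewrite big_ord1 mulr0 mul0r.
rewrite (sum_bernsteinS n (fun k => k%:R)) IHn.
under eq_bigr do rewrite -natr1 mulrDr mulr1.
by rewrite big_split /= IHn sum_bernstein -natr1; ring.
Qed.

Lemma sum_bernstein_natX2 n p :
  \sum_(k < n.+1) bernstein n k p * k%:R ^+ 2 =
  n%:R * p + n%:R * (n%:R - 1) * p ^+ 2.
Proof.
elim: n => [|n IHn]; first by rewrite big_ord1 expr0n mulr0 !mul0r addr0.
rewrite (sum_bernsteinS n (fun k => k%:R ^+ 2)) IHn.
under eq_bigr do rewrite -natr1 sqrrD expr1n mulr1 !mulrDr mulr1.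
by rewrite !big_split /= IHn sum_bernstein_nat sum_bernstein -natr1; ring.
Qed.

Lemma bernstein_variance n p : (0 < n)%N ->
  \sum_(k < n.+1) bernstein n k p * (p - k%:R / n%:R) ^+ 2 = p * (1 - p) / n%:R.
Proof.
move=> n_gt0; have n_neq0 : n%:R != 0 :> R by rewrite pnatr_eq0 -lt0n.
have expand k : bernstein n k p * (p - k%:R / n%:R) ^+ 2 =
    p ^+ 2 * bernstein n k p - 2 * p / n%:R * (bernstein n k p * k%:R) +
    (n%:R ^+ 2)^-1 * (bernstein n k p * k%:R ^+ 2).
  by field.
under eq_bigr do rewrite expand.
rewrite !big_split /= sumrN -!mulr_sumr.
by rewrite sum_bernstein sum_bernstein_nat sum_bernstein_natX2; field.
Qed.

Local Notation mu := (@lebesgue_measure R).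

Lemma integrable_bernstein n k : mu.-integrable `[0, 1] (EFin \o bernstein n k).
Proof.
apply: continuous_compact_integrable; first exact: segment_compact.
apply: continuous_in_subspaceT => x _; apply: cvgM; first exact: cvg_cst.
exact: continuous_XMonemX.
Qed.

Lemma integral_bernstein n k : (k <= n)%N ->
  \int[mu]_(x in `[0, 1]) bernstein n k x = n.+1%:R^-1.
Proof.
move=> le_kn; rewrite RintegralZl //; last exact: integrable_XMonemX.
have -> : \int[mu]_(x in `[0, 1]) (x ^+ k * (1 - x) ^+ (n - k)) =
    beta_fun k.+1 (n - k).+1 by rewrite /beta_fun -Rintegral_mkcond.
rewrite beta_fun_fact subnKC // mulrA -natrM bin_fact // factS natrM invfM.
by rewrite mulrCA divff ?mulr1 // pnatr_eq0 -lt0n fact_gt0.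
Qed.

Lemma integrable_bernstein_comb n (c : 'I_n.+1 -> R) :
  mu.-integrable `[0, 1] (EFin \o fun x => \sum_(j < n.+1) c j * bernstein n j x).
Proof.
apply: eq_integrable (integrable_sum _ _ (fun j _ =>
  integrableZl _ (c j) (integrable_bernstein n j))) => // x _.
by rewrite /= sumEFin.
Qed.

Lemma mean_eq_integral_bernstein n (y : 'I_n.+1 -> R) :
  n.+1%:R^-1 * \sum_(j < n.+1) y j =
  \int[mu]_(x in `[0, 1]) \sum_(j < n.+1) y j * bernstein n j x.
Proof.
rewrite Rintegral_sum // => [|j]; last first.
  exact: eq_integrable _ _ _ _ (integrableZl _ (y j) (integrable_bernstein n j)).
rewrite mulr_sumr; apply: eq_bigr => j _.
by rewrite RintegralZl ?integrable_bernstein ?integral_bernstein 1?mulrC // -ltnS.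
Qed.

End bernstein_basis.

Section bernstein_deviation.
Context {R : realType}.
Implicit Types (n : nat) (p : R).

Lemma bern_devE n (x : 'I_n.+1 -> R) p :
  bern_dev x p = \sum_(k < n.+1) bernstein n k p * `|p - x k|.
Proof. by apply: eq_bigr => k _; rewrite /bernstein !mulrA. Qed.

Lemma bern_dev_ge0 n (x : 'I_n.+1 -> R) p : p \in `[0, 1] -> 0 <= bern_dev x p.
Proof.
by move=> p01; rewrite bern_devE sumr_ge0 // => k _; rewrite mulr_ge0 ?bernstein_ge0.
Qed.

Lemma bern_dev_le1 n (x : 'I_n.+1 -> R) p :
  in_cube x -> p \in `[0, 1] -> bern_dev x p <= 1.
Proof.
move=> x01 p01; rewrite bern_devE -(sum_bernstein n p).
apply: ler_sum => k _; rewrite ler_piMr ?bernstein_ge0 //.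
move: p01 (x01 k); rewrite !in_itv /= => /andP[p0 p1] /andP[xk0 xk1].
by rewrite ler_norml; apply/andP; split; lra.
Qed.

Lemma bern_dev_le_max_dev n (x : 'I_n.+1 -> R) p :
  in_cube x -> p \in `[0, 1] -> bern_dev x p <= max_dev x.
Proof.
move=> x01 p01; apply: ub_le_sup; last by exists p.
by exists 1 => _ [q q01 <-]; apply: bern_dev_le1.
Qed.

Lemma max_dev_ge0 n (x : 'I_n.+1 -> R) : in_cube x -> 0 <= max_dev x.
Proof.
have p01 : (0 : R) \in `[0, 1] by rewrite in_itv /= lexx ler01.
move=> x01; exact: le_trans (bern_dev_ge0 x p01) (bern_dev_le_max_dev x01 p01).
Qed.

Lemma max_dev_le n (x : 'I_n.+1 -> R) B :
  (forall p, p \in `[0, 1] -> bern_dev x p <= B) -> max_dev x <= B.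
Proof.
move=> xB; apply: ge_sup; last by move=> _ [p p01 <-]; exact: xB.
by exists (bern_dev x 0), 0 => //; rewrite /= in_itv /= lexx ler01.
Qed.

Definition grid n : 'I_n.+1 -> R := fun k => (k : nat)%:R / n%:R.
Arguments grid : clear implicits.

Lemma in_cube_grid n : (0 < n)%N -> in_cube (grid n).
Proof.
move=> n_gt0 k; rewrite in_itv /= divr_ge0 ?ler0n //=.
by rewrite ler_pdivrMr ?ltr0n // mul1r ler_nat -ltnS.
Qed.

Lemma bern_dev_grid n p eta : (0 < n)%N -> p \in `[0, 1] -> 0 < eta ->
  bern_dev (grid n) p <= eta + (eta * n%:R)^-1.
Proof.
move=> n_gt0 p01 eta_gt0; rewrite bern_devE.
apply: (@le_trans _ _ (\sum_(k < n.+1) bernstein n k p *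
    (eta + (p - k%:R / n%:R) ^+ 2 / eta))).
  by apply: ler_sum => k _; rewrite ler_wpM2l ?bernstein_ge0 ?ler_norm_add_sqr_div.
have split k : bernstein n k p * (eta + (p - k%:R / n%:R) ^+ 2 / eta) =
    eta * bernstein n k p + eta^-1 * (bernstein n k p * (p - k%:R / n%:R) ^+ 2).
  by ring.
under eq_bigr do rewrite split.
rewrite big_split /= -!mulr_sumr sum_bernstein bernstein_variance // mulr1 lerD2l.
move: p01; rewrite in_itv /= => /andP[p0 p1].
rewrite invfM; apply: ler_wpM2l; first by rewrite invr_ge0 ltW.
apply: ler_piMl; first by rewrite invr_ge0 ler0n.
by rewrite mulr_ile1 ?subr_ge0 // lerBlDr lerDl.
Qed.

Lemma max_dev_minimizer_le n (x : 'I_n.+1 -> R) eta :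
  (0 < n)%N -> is_minimizer x -> 0 < eta -> max_dev x <= eta + (eta * n%:R)^-1.
Proof.
move=> n_gt0 [_ x_min] eta_gt0; apply: le_trans (x_min _ (in_cube_grid n_gt0)) _.
by apply: max_dev_le => p p01; exact: bern_dev_grid.
Qed.

Lemma max_dev_minimizer_cvg0 (a : forall n, 'I_n.+1 -> R) :
  (forall n, (0 < n)%N -> is_minimizer (a n)) -> max_dev (a n) @[n --> \oo] --> 0.
Proof.
move=> a_min; apply/cvgrPdist_lt => e e_gt0.
have e2_gt0 : 0 < e / 2 by rewrite divr_gt0.
near=> n.
have n_gt0 : (0 < n)%N by near: n; exact: nbhs_infty_gt.
have [an01 _] := a_min n n_gt0.
rewrite sub0r normrN ger0_norm ?max_dev_ge0 //.
apply: le_lt_trans (max_dev_minimizer_le n_gt0 (a_min n n_gt0) e2_gt0) _.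
rewrite [X in _ < X](splitr e) ltrD2l invf_plt ?posrE ?mulr_gt0 ?ltr0n //.
rewrite -ltr_pdivrMl //; near: n; exact: nbhs_infty_gtr.
Unshelve. all: end_near.
Qed.

End bernstein_deviation.

Section empirical_mean.
Context {R : realType}.
Local Notation mu := (@lebesgue_measure R).

Lemma bernstein_approx_le n (x : 'I_n.+1 -> R) (g : R -> R) e K p :
  in_cube x -> p \in `[0, 1] ->
  (forall u v, u \in `[0, 1] -> v \in `[0, 1] -> `|g u - g v| <= e + K * `|u - v|) ->
  `|\sum_(j < n.+1) g (x j) * bernstein n j p - g p| <= e + K * bern_dev x p.
Proof.
move=> x01 p01 g_mod.
have -> : \sum_(j < n.+1) g (x j) * bernstein n j p - g p =
    \sum_(j < n.+1) bernstein n j p * (g (x j) - g p).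
  rewrite -[X in _ - X]mul1r -(sum_bernstein n p) mulr_suml -sumrB.
  by apply: eq_bigr => j _; rewrite mulrBr mulrC.
apply: le_trans (ler_norm_sum _ _ _) _.
rewrite bern_devE mulr_sumr -[e]mul1r -(sum_bernstein n p) mulr_suml -big_split /=.
apply: ler_sum => j _; rewrite normrM ger0_norm ?bernstein_ge0 //.
by rewrite mulrCA -mulrDr ler_wpM2l ?bernstein_ge0 // distrC g_mod.
Qed.

Lemma dist_mean_integral_le n (x : 'I_n.+1 -> R) (g : R -> R) e K :
  in_cube x -> {within `[0, 1], continuous g} -> 0 <= K ->
  (forall u v, u \in `[0, 1] -> v \in `[0, 1] -> `|g u - g v| <= e + K * `|u - v|) ->
  `|n.+1%:R^-1 * \sum_(j < n.+1) g (x j) - \int[mu]_(y in `[0, 1]) g y| <=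
    e + K * max_dev x.
Proof.
move=> x01 gc K_ge0 g_mod.
have g_int : mu.-integrable `[0, 1] (EFin \o g).
  by apply: continuous_compact_integrable gc; exact: segment_compact.
have comb_int := integrable_bernstein_comb (fun j => g (x j)).
rewrite mean_eq_integral_bernstein -RintegralB //.
apply: normr_Rintegral01_le => [|p p01].
  exact: eq_integrable _ _ _ _ (integrableB _ comb_int g_int).
apply: le_trans (bernstein_approx_le x01 p01 g_mod) _.
by rewrite lerD2l ler_wpM2l // bern_dev_le_max_dev.
Qed.

Lemma mean_cvg_integral (x : forall n, 'I_n.+1 -> R) (g : R -> R) :
  (\forall n \near \oo, in_cube (x n)) -> max_dev (x n) @[n --> \oo] --> 0 ->
  {within `[0, 1], continuous g} ->
  n.+1%:R^-1 * \sum_(j < n.+1) g (x n j) @[n --> \oo] -->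
    \int[mu]_(y in `[0, 1]) g y.
Proof.
move=> x01 x_dev0 gc.
have [M gM] : exists M, forall y, y \in `[0, 1] -> `|g y| <= M.
  have [M [_ gM]] := compact_bounded (continuous_compact gc (@segment_compact R 0 1)).
  by exists (M + 1) => y y01; apply: gM; [rewrite ltrDl | exists y].
have M_ge0 : 0 <= M by apply: le_trans (gM 0 _); rewrite ?in_itv /= ?lexx ?ler01.
apply/cvgrPdist_lt => e e_gt0.
have e2_gt0 : 0 < e / 2 by rewrite divr_gt0.
have [d d_gt0 g_unif] := compact_unif_continuous (@segment_compact R 0 1) gc e2_gt0.
have g_mod := dist_le_unif_modulus d_gt0 gM g_unif.
have K_ge0 : 0 <= 2 * M / d by rewrite divr_ge0 ?mulr_ge0 // ltW.
have K_dev : \forall n \near \oo, `|2 * M / d * max_dev (x n)| < e / 2.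
  apply: cvgr0_norm_lt => //; rewrite -(mulr0 (2 * M / d)).
  by apply: cvgM => //; exact: cvg_cst.
near=> n.
have xn01 : in_cube (x n) by near: n.
rewrite distrC; apply: le_lt_trans (dist_mean_integral_le xn01 gc K_ge0 g_mod) _.
rewrite [X in _ < X](splitr e) ltrD2l (le_lt_trans (ler_norm _)) //.
by near: n.
Unshelve. all: end_near.
Qed.

End empirical_mean.

Theorem corollary3p5 (R : realType) (a : forall n : nat, 'I_n.+1 -> R)
  (ha : forall n : nat, (0 < n)%N -> is_minimizer (a n)) :
  forall g : R -> R, {within `[0, 1]%classic, continuous g} ->
    (fun n : nat => (n.+1%:R)^-1 * \sum_(j < n.+1) g (a n j)) @ \oo -->
      Rintegral (@lebesgue_measure R) `[0, 1]%classic g.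
Proof.
move=> g gc; apply: mean_cvg_integral gc; last exact: max_dev_minimizer_cvg0.
near=> n; apply: (ha n _).1; near: n; exact: nbhs_infty_gt.
Unshelve. all: end_near.
Qed.
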